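(* Let $\varSigma$ be a $2k$-dimensional rational sphere on vertex set $[n]$ with vertex coordinates $v_i\in\mathbb{R}^{2k+1}$ forming a linear system of parameters, and suppose $\mathcal{A}^*(\varSigma)$ has the hard Lefschetz property. Then for every subcomplex $\varDelta$ of $\varSigma$ (with the restricted coordinates), $$\kappa_k(\varSigma,\varDelta)\ \le\ \kappa_{k+1}(\varSigma,\varDelta),$$ where $\kappa_i(\varSigma,\varDelta)=\dim\mathrm{coker}\big[\mathcal{A}_i(\varDelta)\to\mathcal{A}_i(\varSigma)\big]$.
   Context: A $2k$-dimensional rational sphere is a simplicial complex which is a rational homology manifold with the rational homology of $S^{2k}$. Let $d=2k+1$. For a simplicial complex $\varGamma$ on vertices from $[n]$ with coordinates $v_i=(v_{i,1},\dots,v_{i,d})\in\mathbb{R}^d$, let $\mathbb{R}[y_1,\dots,y_n]$ be a polynomial ring on which $x_i$ acts by $\partial/\partial y_i$. The stress space $\mathcal{A}_i(\varGamma)$ is the space of homogeneous degree-$i$ polynomials $p(y)$ such that $m(\partial/\partial y)p=0$ for every monomial $m(x)$ whose support is not a face of $\varGamma$, and $\sum_{r}v_{r,j}\,\partial p/\partial y_r=0$ for $j=1,\dots,d$. Since $\varDelta\subset\varSigma$, every stress of $\varDelta$ is a stress of $\varSigma$, giving the inclusion $\mathcal{A}_i(\varDelta)\to\mathcal{A}_i(\varSigma)$. $\mathcal{A}^*(\varSigma)=\mathbb{R}[\varSigma]/(\theta_1,\dots,\theta_d)$ with $\theta_j=\sum_iv_{i,j}x_i$ and $\mathbb{R}[\varSigma]$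 the face ring. The hard Lefschetz property means there is $\ell\in\mathcal{A}^1(\varSigma)$ with multiplication by $\ell^{d-2j}:\mathcal{A}^j(\varSigma)\to\mathcal{A}^{d-j}(\varSigma)$ an isomorphism for all $j\le d/2$. *)

From HB Require Import structures.
From mathcomp Require Import all_boot all_order all_algebra.
From mathcomp Require Import mpoly.
From mathcomp Require Import reals.
From Stdlib Require Import ClassicalDescription.

Set Implicit Arguments.
Unset Strict Implicit.
Unset Printing Implicit Defensive.

Import Order.TTheory GRing.Theory Num.Theory.
Local Open Scope ring_scope.

Definition asbool (P : Prop) : bool :=
  if excluded_middle_informative P then true else false.

Definition is_complex (n : nat) (G : {set {set 'I_n}}) : Prop :=
  forall F H : {set 'I_n}, H \subset F -> F \in G -> H \in G.

Definition link (n : nat) (G : {set {set 'I_n}}) (F : {set 'I_n}) :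
  {set {set 'I_n}} :=
  [set H in G | [disjoint H & F] && ((H :|: F) \in G)].

(* Chains are indexed by faces; a face of cardinality c is a (c-1)-simplex,
   the empty face giving the augmentation (hence reduced homology).        *)

Definition bd_coef (n : nat) (G : {set {set 'I_n}}) (c : nat)
  (F H : {set 'I_n}) : rat :=
  if (F \in G) && (H \in G) && (#|F| == c) then
    \sum_(v in F | H == F :\ v) (-1) ^+ #|[set u in F | (u < v)%N]|
  else 0.

Definition nsub (n : nat) : nat := #|{set 'I_n}|.

Definition bd_mx (n : nat) (G : {set {set 'I_n}}) (c : nat) :
  'M[rat]_(nsub n, nsub n) :=
  \matrix_(a < nsub n, b < nsub n)
     bd_coef G c (enum_val a) (enum_val b).

Definition nfaces (n : nat) (G : {set {set 'I_n}}) (c : nat) : nat :=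
  #|[set F in G | #|F| == c]|.

(* dimension of the reduced rational homology H~_{c-1}(G; Q)
   = dim ker d_c - rank d_(c+1) *)
Definition rbetti (n : nat) (G : {set {set 'I_n}}) (c : nat) : nat :=
  (nfaces G c - \rank (bd_mx G c) - \rank (bd_mx G c.+1))%N.

(* G has the reduced rational homology of the sphere S^(e-1)
   (e = dimension + 1; e = 0 is the (-1)-sphere {emptyset}) *)
Definition rat_homology_sphere (n : nat) (G : {set {set 'I_n}}) (e : nat) : Prop :=
  forall c : nat, rbetti G c = (c == e) :> nat.

(* A 2k-dimensional rational sphere: a simplicial complex which is a rational
   homology manifold (the link of every nonempty face F has the rational
   homology of S^(2k - |F|)) having the rational homology of S^(2k)
   (the case F = emptyset, whose link is the complex itself). *)
Definition rational_sphere (n k : nat) (S : {set {set 'I_n}}) : Prop :=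
  [/\ is_complex S, set0 \in S &
      forall F, F \in S ->
        (#|F| <= k.*2.+1)%N /\ rat_homology_sphere (link S F) (k.*2.+1 - #|F|)].

Section Poly.
Variable R : realType.
Variables (n d : nat).
Variable v : 'I_n -> 'I_d -> R.

Definition xF (F : {set 'I_n}) : {mpoly R[n]} := \prod_(i in F) 'X_i.

Definition theta (j : 'I_d) : {mpoly R[n]} := \sum_(i < n) v i j *: 'X_i.

(* membership in the ideal I_G + (theta_1, ..., theta_d) of R[x_1..x_n],
   where the Stanley-Reisner ideal I_G is generated by the x_F, F not in G *)
Definition in_ideal (G : {set {set 'I_n}}) (p : {mpoly R[n]}) : Prop :=
  exists (q : 'I_d -> {mpoly R[n]}) (g : {set 'I_n} -> {mpoly R[n]}),
    p = \sum_(j < d) theta j * q j + \sum_(F | F \notin G) xF F * g F.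

(* theta_1..theta_d is a linear system of parameters for R[G]:
   the quotient A(G) = R[G]/(theta) is finite-dimensional, i.e. its graded
   pieces vanish in all large degrees. *)
Definition is_lsop (G : {set {set 'I_n}}) : Prop :=
  exists N : nat, forall j : nat, (N <= j)%N ->
    forall p : {mpoly R[n]}, p \is j.-homog -> in_ideal G p.

(* Hard Lefschetz property of A^*(G): some l in A^1(G) (represented by a
   linear form) such that multiplication by l^(d-2j) : A^j -> A^(d-j) is an
   isomorphism (injective and surjective) for every j <= d/2. *)
Definition hard_lefschetz (G : {set {set 'I_n}}) : Prop :=
  exists l : {mpoly R[n]}, l \is 1.-homog /\
    forall j : nat, (j.*2 <= d)%N ->
      (forall p : {mpoly R[n]}, p \is j.-homog ->
          in_ideal G (l ^+ (d - j.*2) * p) -> in_ideal G p) /\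
      (forall q : {mpoly R[n]}, q \is (d - j)%N.-homog ->
          exists p : {mpoly R[n]}, p \is j.-homog /\
            in_ideal G (q - l ^+ (d - j.*2) * p)).

(* polynomials p(y) in R[y_1..y_n], x_i acting as d/dy_i *)

Definition mono_supp (m : 'X_{1..n}) : {set 'I_n} := [set i | m i != 0%N].

Definition is_stress (G : {set {set 'I_n}}) (i : nat) (p : {mpoly R[n]}) : Prop :=
  [/\ p \is i.-homog,
      (forall m : 'X_{1..n}, mono_supp m \notin G -> mderivm m p = 0) &
      (forall j : 'I_d, \sum_(r < n) v r j *: mderiv r p = 0)].

(* kappa_i(S, D) = dim coker [A_i(D) -> A_i(S)], i.e. the maximal number of
   stresses of S that are linearly independent modulo the stresses of D.
   (The range bound 'C(n+i,i) exceeds the dimension of the space of degree-i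
   homogeneous polynomials, so it does not cut anything.) *)
Definition kappa (S D : {set {set 'I_n}}) (i : nat) : nat :=
  \max_(e < 'C(n + i, i).+1 |
        asbool (exists ps : 'I_e -> {mpoly R[n]},
          (forall t, is_stress S i (ps t)) /\
          (forall c : 'I_e -> R,
              is_stress D i (\sum_(t < e) c t *: ps t) -> forall t, c t = 0)))
    e.

End Poly.

From HB Require Import structures.
From mathcomp Require Import all_boot all_order all_algebra.
From mathcomp Require Import ssrcomplements mpoly.
From mathcomp Require Import reals.
From Stdlib Require Import ClassicalDescription.
Set Implicit Arguments.
Unset Strict Implicit.
Unset Printing Implicit Defensive.
Import Order.TTheory GRing.Theory Num.Theory.
Local Open Scope ring_scope.

(* Through the apolar pairing <f, p> = (f(d/dy) p)(0), the degree-i stresses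
   of a complex are the linear functionals on the degree-i part of its
   Artinian reduction A.  Under this duality, multiplication by a linear form
   l : A^k -> A^(k+1) becomes the differential operator l(d/dy) from
   (k+1)-stresses to k-stresses, so injectivity of l in the middle degree (part
   of hard Lefschetz for d = 2k+1) makes l(d/dy) onto the k-stresses of Sigma.
   As l(d/dy) also maps stresses of Delta to stresses of Delta, lifting
   k-stresses of Sigma that are independent modulo Delta yields as many
   (k+1)-stresses of Sigma that are independent modulo Delta. *)

Lemma fredholm_solvable (F : fieldType) (I J : finType) (A : I -> J -> F) (b : I -> F) :
  (forall u : I -> F, (forall j, \sum_i u i * A i j = 0) -> \sum_i u i * b i = 0) ->
  exists x : J -> F, forall i, \sum_j A i j * x j = b i.
Proof.
move=> orth_b.
have sum_enum (K : finType) (G : K -> F) : \sum_(i < #|K|) G (enum_val i) = \sum_x G x.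
  by rewrite [RHS](reindex (@enum_val K K)) //; apply: onW_bij; apply: enum_val_bij.
pose M : 'M[F]_(#|J|, #|I|) := \matrix_(j, i) A (enum_val i) (enum_val j).
have ME j i : M j i = A (enum_val i) (enum_val j) by rewrite mxE.
have /submxP[y defB] : (\row_i b (enum_val i) <= M)%MS.
  rewrite submxE; apply/eqP/rowP => c; rewrite !mxE.
  pose u x := cokermx M (enum_rank x) c.
  have Mu j : \sum_x u x * A x j = 0.
    move/matrixP: (mulmx_coker M) => /(_ (enum_rank j) c); rewrite !mxE => MC0.
    rewrite -[RHS]MC0 -[LHS]sum_enum; apply: eq_bigr => i _.
    by rewrite /u ME enum_valK enum_rankK mulrC.
  rewrite -[RHS](orth_b u Mu) -[RHS]sum_enum; apply: eq_bigr => i _.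
  by rewrite /u enum_valK mxE mulrC.
exists (fun j => y 0 (enum_rank j)) => i.
move/matrixP: defB => /(_ 0 (enum_rank i)); rewrite !mxE enum_rankK => ->.
rewrite -[LHS]sum_enum; apply: eq_bigr => j _.
by rewrite ME enum_valK enum_rankK mulrC.
Qed.

Section PolyDiffOperator.
Variables (R : comNzRingType) (n : nat).
Implicit Types (f g p : {mpoly R[n]}) (m : 'X_{1..n}).

(* [mderivp f p] is f(d/dy) p, so [(mderivp f p)@_0] is the apolar pairing. *)
Definition mderivp f p : {mpoly R[n]} := \sum_(m <- msupp f) f@_m *: p^`M[m].

Lemma mderivpwE K f p : (msize f <= K)%N ->
  mderivp f p = \sum_(m : 'X_{1..n < K}) f@_m *: p^`M[m].
Proof.
move=> le_fK; rewrite /mderivp (big_mksub 'X_{1..n < K}) ?msupp_uniq //=.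
  by rewrite big_rmcond //= => m /memN_msupp_eq0 ->; rewrite scale0r.
by move=> m /msize_mdeg_lt /leq_trans; apply.
Qed.

Lemma mderivp_is_linear f : linear (mderivp f).
Proof.
move=> c p q; rewrite /mderivp scaler_sumr -big_split /=.
by apply: eq_bigr => m _; rewrite linearP scalerDr !scalerA mulrC.
Qed.

HB.instance Definition _ f := GRing.isLinear.Build R {mpoly R[n]} {mpoly R[n]} _
  (mderivp f) (mderivp_is_linear f).

Lemma mderivpDl f g p : mderivp (f + g) p = mderivp f p + mderivp g p.
Proof.
have le_f := leq_maxl (msize f) (msize g); have le_g := leq_maxr (msize f) (msize g).
rewrite !(@mderivpwE (maxn (msize f) (msize g))) ?msizeD_le // -big_split /=.
by apply: eq_bigr => m _; rewrite mcoeffD scalerDl.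
Qed.

Lemma mderivpZl c f p : mderivp (c *: f) p = c *: mderivp f p.
Proof.
rewrite !(@mderivpwE (msize f)) ?msizeZ_le // scaler_sumr.
by apply: eq_bigr => m _; rewrite mcoeffZ scalerA.
Qed.

Lemma mderivp0l p : mderivp 0 p = 0.
Proof. by rewrite /mderivp msupp0 big_nil. Qed.

Lemma mderivp_suml I (r : seq I) (P : pred I) (F : I -> {mpoly R[n]}) p :
  mderivp (\sum_(i <- r | P i) F i) p = \sum_(i <- r | P i) mderivp (F i) p.
Proof. exact: (big_morph (mderivp^~ p) (fun f g => mderivpDl f g p) (mderivp0l p)). Qed.

Lemma mderivpX m p : mderivp 'X_[m] p = p^`M[m].
Proof. by rewrite /mderivp msuppX big_seq1 mcoeffX eqxx scale1r. Qed.

Lemma mderivpM f g p : mderivp (f * g) p = mderivp f (mderivp g p).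
Proof.
have mderivpXM m h : mderivp ('X_[m] * h) p = (mderivp h p)^`M[m].
  rewrite {1}(mpolyE h) mulr_sumr mderivp_suml [in RHS]/mderivp raddf_sum /=.
  apply: eq_bigr => a _; rewrite -scalerAr -mpolyXD mderivpZl mderivpX.
  by rewrite mderivmZ addmC mderivmDm.
rewrite {1}(mpolyE f) mulr_suml mderivp_suml; apply: eq_bigr => m _.
by rewrite -scalerAl mderivpZl mderivpXM.
Qed.

Lemma mderivpC f g p : mderivp f (mderivp g p) = mderivp g (mderivp f p).
Proof. by rewrite -!mderivpM mulrC. Qed.

Lemma msize_dhomog D p : p \is D.-homog -> (msize p <= D.+1)%N.
Proof.
by move=> hp; rewrite mmeasureE; apply/bigmax_leqP_seq => m /(dhomog_mf hp) ->.
Qed.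

Lemma dhomogMX e D p m : p \is e.-homog -> (e + mdeg m)%N = D -> p * 'X_[m] \is D.-homog.
Proof. by move=> hp <-; rewrite dhomogM // dhomogX. Qed.

Lemma dhomog_mderivm D m p : p \is D.-homog -> p^`M[m] \is (D - mdeg m)%N.-homog.
Proof.
move=> hp; apply/dhomogP => b; rewrite mcoeff_msupp mcoeff_mderivm.
have [<-|ne] := eqVneq (mdeg (m + b)) D; first by rewrite mdegD addKn.
by rewrite (dhomog_nemf_coeff hp ne) mul0rn eqxx.
Qed.

Lemma dhomog_mderivp e D f p : f \is e.-homog -> p \is D.-homog ->
  mderivp f p \is (D - e)%N.-homog.
Proof.
move=> hf hp; rewrite /mderivp big_seq; apply: rpred_sum => m fm.
by rewrite rpredZ // -(dhomog_mf hf fm) dhomog_mderivm.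
Qed.

End PolyDiffOperator.

Section Apolarity.
Variables (R : numFieldType) (n : nat).
Implicit Types (f h p : {mpoly R[n]}) (m : 'X_{1..n}).

Lemma mcoeff0_mderivm m p : (p^`M[m])@_0 = p@_m *+ \prod_(i < n) (m i)`!.
Proof.
rewrite mcoeff_mderivm addm0; congr (_ *+ _).
by apply: eq_bigr => i _; rewrite ffactnn.
Qed.

Lemma prod_fact_neq0 m : (\prod_(i < n) (m i)`! != 0)%N.
Proof. by rewrite -lt0n prodn_gt0 // => i; rewrite fact_gt0. Qed.

Lemma mcoeff_eq0_mderivm m p : (p^`M[m])@_0 = 0 -> p@_m = 0.
Proof.
rewrite mcoeff0_mderivm => /eqP.
by rewrite mulrn_eq0 (negbTE (prod_fact_neq0 m)) orFb => /eqP.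
Qed.

Lemma dhomog_eq0_mderivm D h : h \is D.-homog ->
  (forall b, mdeg b = D -> (h^`M[b])@_0 = 0) -> h = 0.
Proof.
move=> hh h0; apply/mpolyP => b; rewrite mcoeff0.
have [/h0/mcoeff_eq0_mderivm //|ne] := eqVneq (mdeg b) D.
exact: dhomog_nemf_coeff hh ne.
Qed.

Lemma mcoeff0_mderivp_dhomog e D f p : f \is e.-homog -> p \is D.-homog -> e != D ->
  (mderivp f p)@_0 = 0.
Proof.
move=> hf hp neD; rewrite /mderivp raddf_sum big_seq big1 // => m fm.
rewrite /= mcoeffZ mcoeff0_mderivm (dhomog_nemf_coeff hp) ?mul0rn ?mulr0 //.
by rewrite (dhomog_mf hf fm).
Qed.

Lemma apolar_system_solvable (I : finType) D (f : I -> {mpoly R[n]}) (c : I -> R) :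
  (forall i, f i \is D.-homog) ->
  (forall u : I -> R, \sum_i u i *: f i = 0 -> \sum_i u i * c i = 0) ->
  exists2 p, p \is D.-homog & forall i, (mderivp (f i) p)@_0 = c i.
Proof.
move=> hf consistent.
pose T := 'X_{1..n < D.+1}.
have [x solx] : exists x : T -> R, forall i, \sum_(m : T) (f i)@_m * x m = c i.
  apply: fredholm_solvable => u orth; apply: consistent.
  apply/mpolyP => m; rewrite mcoeff0 raddf_sum /=.
  have [degm|ne] := eqVneq (mdeg m) D; last first.
    by rewrite big1 // => i _; rewrite mcoeffZ (dhomog_nemf_coeff (hf i) ne) mulr0.
  have ltm : (mdeg m < D.+1)%N by rewrite degm.
  rewrite -[RHS](orth (BMultinom ltm)); apply: eq_bigr => i _.
  by rewrite mcoeffZ.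
pose y (m : T) := (mdeg m == D)%:R * x m / (\prod_(i < n) (m i)`!)%:R.
pose p := \sum_(m : T) y m *: 'X_[val m].
have dfact (m : T) : (p^`M[val m])@_0 = (mdeg m == D)%:R * x m.
  rewrite mcoeff0_mderivm raddf_sum (bigD1 m) //= big1 ?addr0.
    rewrite mcoeffZ mcoeffX eqxx mulr1 -[LHS]mulr_natr.
    by rewrite divfK // pnatr_eq0 prod_fact_neq0.
  move=> m' ne; rewrite mcoeffZ mcoeffX.
  by rewrite (inj_eq val_inj) (negbTE ne) mulr0.
exists p.
  apply: rpred_sum => m _; rewrite /y; have [degm|] := eqVneq (mdeg m) D.
    by rewrite rpredZ // dhomogX; apply/eqP.
  by rewrite mul0r mul0r scale0r rpred0.
move=> i; rewrite -solx (@mderivpwE _ _ D.+1) ?msize_dhomog //.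
rewrite raddf_sum /=; apply: eq_bigr => m _; rewrite mcoeffZ dfact.
have [degm|ne] := eqVneq (mdeg m) D; first by rewrite mul1r.
by rewrite (dhomog_nemf_coeff (hf i) ne) !mul0r.
Qed.

End Apolarity.

Section SetMonomial.
Variable n : nat.
Implicit Type m : 'X_{1..n}.

Definition mnm_set (F : {set 'I_n}) : 'X_{1..n} := (\sum_(i in F) U_(i))%MM.

Lemma mnm_setE F i : mnm_set F i = (i \in F).
Proof.
rewrite /mnm_set mnm_sumE; have [iF|iNF] := boolP (i \in F).
  rewrite (bigD1 i) //= mnm1E eqxx big1 ?addn0 // => j /andP[_ ne].
  by rewrite mnm1E (negbTE ne).
by rewrite big1 // => j jF; rewrite mnm1E; case: eqP => // eji; rewrite -eji jF in iNF.
Qed.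

Lemma mono_supp_mnm_set F : mono_supp (mnm_set F) = F.
Proof. by apply/setP => i; rewrite inE mnm_setE; case: (i \in F). Qed.

Lemma mnm_set_mono_supp_le m : (mnm_set (mono_supp m) <= m)%MM.
Proof. by apply/mnm_lepP => i; rewrite mnm_setE inE; case: (m i). Qed.

Lemma mdeg_mnm_set F : mdeg (mnm_set F) = #|F|.
Proof.
by rewrite /mnm_set mdeg_sum (eq_bigr (fun=> 1%N)) ?sum1_card // => i; rewrite mdeg1.
Qed.

End SetMonomial.

Section Stresses.
Variables (R : realType) (n d : nat) (v : 'I_n -> 'I_d -> R).
Implicit Types (G : {set {set 'I_n}}) (f g h p q : {mpoly R[n]}).

Lemma xFE F : @xF R n F = 'X_[mnm_set F].
Proof. by rewrite /xF /mnm_set -mprodXE. Qed.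

Lemma dhomog_xF F : @xF R n F \is #|F|.-homog.
Proof. by rewrite xFE dhomogX; apply/eqP; apply: mdeg_mnm_set. Qed.

Lemma dhomog_theta j : theta v j \is 1.-homog.
Proof.
by apply: rpred_sum => i _; rewrite rpredZ // dhomogX; apply/eqP; apply: mdeg1.
Qed.

Lemma mderivp_theta j p : mderivp (theta v j) p = \sum_(r < n) v r j *: p^`M(r).
Proof.
rewrite mderivp_suml; apply: eq_bigr => r _.
by rewrite mderivpZl mderivpX mderivmU1m.
Qed.

Lemma in_ideal0 G : in_ideal v G 0.
Proof. by exists (fun=> 0), (fun=> 0); rewrite !big1 ?addr0 // => *; rewrite mulr0. Qed.

Lemma in_idealD G g h : in_ideal v G g -> in_ideal v G h -> in_ideal v G (g + h).
Proof.
move=> [q1 [g1 ->]] [q2 [g2 ->]].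
exists (fun j => q1 j + q2 j), (fun F => g1 F + g2 F).
rewrite addrACA -!big_split /=.
by congr (_ + _); apply: eq_bigr => *; rewrite mulrDr.
Qed.

Lemma in_idealMl G h g : in_ideal v G g -> in_ideal v G (h * g).
Proof.
move=> [q1 [g1 ->]]; exists (fun j => h * q1 j), (fun F => h * g1 F).
by rewrite mulrDr !mulr_sumr; congr (_ + _); apply: eq_bigr => *; rewrite mulrCA.
Qed.

Lemma in_idealMr G g h : in_ideal v G g -> in_ideal v G (g * h).
Proof. by rewrite mulrC; apply: in_idealMl. Qed.

Lemma in_idealZ G c g : in_ideal v G g -> in_ideal v G (c *: g).
Proof. by rewrite -mul_mpolyC; apply: in_idealMl. Qed.

Lemma in_ideal_sum G I (r : seq I) (P : pred I) (F : I -> {mpoly R[n]}) :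
  (forall i, P i -> in_ideal v G (F i)) -> in_ideal v G (\sum_(i <- r | P i) F i).
Proof. by move=> idF; apply: big_ind => //; [apply: in_ideal0 | apply: in_idealD]. Qed.

Lemma in_ideal_theta G j : in_ideal v G (theta v j).
Proof.
exists (fun i => (i == j)%:R), (fun=> 0).
rewrite [X in _ + X]big1 ?addr0 => [|F _]; last by rewrite mulr0.
rewrite (bigD1 j) //= eqxx mulr1 big1 ?addr0 // => i /negbTE->.
by rewrite mulr0.
Qed.

Lemma in_ideal_xF G F : F \notin G -> in_ideal v G (@xF R n F).
Proof.
move=> FNG; exists (fun=> 0), (fun H => (H == F)%:R).
rewrite big1 ?add0r => [|j _]; last by rewrite mulr0.
rewrite (bigD1 F) //= eqxx mulr1 big1 ?addr0 // => H /andP[_ /negbTE->].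
by rewrite mulr0.
Qed.

Lemma mderivp_stress_ideal G i q g : is_stress v G i q -> in_ideal v G g ->
  mderivp g q = 0.
Proof.
move=> [_ hmon hth] [qs [gs ->]].
rewrite mderivpDl !mderivp_suml !big1 ?addr0 // => [F FNG|j _]; rewrite mulrC mderivpM.
  by rewrite xFE mderivpX hmon ?mono_supp_mnm_set // linear0.
by rewrite mderivp_theta hth linear0.
Qed.

Lemma stress_mderivp G i e f p : f \is e.-homog -> is_stress v G (e + i) p ->
  is_stress v G i (mderivp f p).
Proof.
move=> hf [hp hmon hth]; split.
- by rewrite -(addKn e i) (dhomog_mderivp hf hp).
- by move=> m sm; rewrite -mderivpX mderivpC mderivpX hmon // linear0.
- by move=> j; rewrite -mderivp_theta mderivpC mderivp_theta hth linear0.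
Qed.

Lemma stress_apolar G D p : p \is D.-homog ->
  (forall F m, F \notin G -> (#|F| + mdeg m)%N = D ->
     (mderivp (@xF R n F * 'X_[m]) p)@_0 = 0) ->
  (forall j m, (mdeg m).+1 = D -> (mderivp (theta v j * 'X_[m]) p)@_0 = 0) ->
  is_stress v G D p.
Proof.
move=> hp hmon hth; split => // [m smNG|j].
  apply: (dhomog_eq0_mderivm (dhomog_mderivm m hp)) => b _.
  set F := mono_supp m; set r := (m - mnm_set F + b)%MM.
  rewrite -mderivmDm; have -> : (m + b = mnm_set F + r)%MM.
    by rewrite addmA [(mnm_set _ + _)%MM]addmC submK // mnm_set_mono_supp_le.
  rewrite -mderivpX mpolyXD -xFE.
  have [degr|ne] := eqVneq (#|F| + mdeg r)%N D; first exact: hmon.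
  exact: mcoeff0_mderivp_dhomog (dhomogMX (dhomog_xF F) erefl) hp ne.
rewrite -mderivp_theta.
apply: (dhomog_eq0_mderivm (dhomog_mderivp (dhomog_theta j) hp)) => b _.
rewrite -mderivpX -mderivpM mulrC.
have [degb|ne] := eqVneq (mdeg b).+1 D; first exact: hth.
exact: mcoeff0_mderivp_dhomog (dhomogMX (dhomog_theta j) erefl) hp ne.
Qed.

Section Lift.
Variables (G : {set {set 'I_n}}) (k : nat) (l q : {mpoly R[n]}).
Hypothesis hl : l \is 1.-homog.
Hypothesis l_inj : forall g, g \is k.-homog -> in_ideal v G (l * g) -> in_ideal v G g.
Hypothesis hq : is_stress v G k q.

(* The lift p is pinned down by its pairings with the monomials of degree k+1:
   they vanish on the degree-(k+1) generators of the ideal, and the pairing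
   with l * 'X_[b] is that of 'X_[b] with q. *)
Local Notation T := 'X_{1..n < k.+2}.
Local Notation IF :=
  {x : {set 'I_n} * T | (x.1 \notin G) && (#|x.1| + mdeg x.2 == k.+1)%N}.
Local Notation IT := {x : 'I_d * T | mdeg x.2 == k}.
Local Notation IL := {b : T | mdeg b == k}.

Definition lift_eq (i : IF + IT + IL) : {mpoly R[n]} :=
  match i with
  | inl (inl x) => @xF R n (val x).1 * 'X_[(val x).2]
  | inl (inr x) => theta v (val x).1 * 'X_[(val x).2]
  | inr b => l * 'X_[val (val b)]
  end.

Definition lift_rhs (i : IF + IT + IL) : R :=
  if i is inr b then (q^`M[val (val b)])@_0 else 0.

Lemma dhomog_lift_eq i : lift_eq i \is k.+1.-homog.
Proof.
case: i => [[[[F m] /= /andP[_ /eqP degm]]|[[j m] /= /eqP degm]]|[b /eqP degb]] /=.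
- exact: dhomogMX (dhomog_xF F) degm.
- by apply: dhomogMX (dhomog_theta j) _; rewrite add1n degm.
- by apply: dhomogMX hl _; rewrite add1n degb.
Qed.

Lemma lift_system_consistent u :
  \sum_i u i *: lift_eq i = 0 -> \sum_i u i * lift_rhs i = 0.
Proof.
rewrite !big_sumType /=.
set h := (X in X + _ = 0); set g := \sum_(b : IL) u (inr b) *: 'X_[val (val b)].
have h_ideal : in_ideal v G h.
  apply: in_idealD; apply: in_ideal_sum => x _.
    by apply/in_idealZ/in_idealMr/in_ideal_xF; case/andP: (valP x).
  exact/in_idealZ/in_idealMr/in_ideal_theta.
have hg : g \is k.-homog.
  by apply: rpred_sum => b _; rewrite rpredZ // dhomogX; apply: (valP b).
move=> /eqP; rewrite addr_eq0 => /eqP hE.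
have lg_ideal : in_ideal v G (l * g).
  have -> : l * g = (-1) *: h.
    rewrite hE scaleN1r opprK mulr_sumr.
    by apply: eq_bigr => b _; rewrite scalerAr.
  exact: in_idealZ.
have /(congr1 (mcoeff 0)) := mderivp_stress_ideal hq (l_inj hg lg_ideal).
rewrite mcoeff0 mderivp_suml raddf_sum /= => gq0.
rewrite [X in X + _ + _]big1 => [|x _]; last by rewrite mulr0.
rewrite [X in _ + X + _]big1 => [|x _]; last by rewrite mulr0.
rewrite !add0r -[RHS]gq0.
by apply: eq_bigr => b _; rewrite mderivpZl mcoeffZ mderivpX.
Qed.

Lemma stress_lift : exists2 p, is_stress v G k.+1 p & mderivp l p = q.
Proof.
have [hqk _ _] := hq.
have [p hp solp] := apolar_system_solvable dhomog_lift_eq lift_system_consistent.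
exists p.
  apply: (stress_apolar hp) => [F m FNG degm|j m degm].
    have ltm : (mdeg m < k.+2)%N by rewrite ltnS -degm leq_addl.
    have iF : (F \notin G) && (#|F| + mdeg m == k.+1)%N by rewrite FNG degm eqxx.
    exact: (solp (inl (inl (exist _ (F, BMultinom ltm) iF : IF)))).
  have ltm : (mdeg m < k.+2)%N by rewrite degm.
  have iT : mdeg m == k by rewrite -eqSS degm.
  exact: (solp (inl (inr (exist _ (j, BMultinom ltm) iT : IT)))).
have hlp : mderivp l p \is k.-homog by have := dhomog_mderivp hl hp; rewrite subn1.
apply/eqP; rewrite -subr_eq0; apply/eqP.
apply: (dhomog_eq0_mderivm (rpredB hlp hqk)) => b degb.
have ltb : (mdeg b < k.+2)%N by rewrite degb.
have iL : mdeg b == k by rewrite degb.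
apply/eqP; rewrite raddfB /= mcoeffB -[(mderivp l p)^`M[b]]mderivpX -mderivpM mulrC.
by rewrite subr_eq0 (solp (inr (exist _ (BMultinom ltb) iL : IL))).
Qed.

End Lift.

Lemma kappa_le_succ S D i l : l \is 1.-homog ->
  (forall q, is_stress v S i q -> exists2 p, is_stress v S i.+1 p & mderivp l p = q) ->
  (kappa v S D i <= kappa v S D i.+1)%N.
Proof.
move=> hl lift; apply/bigmax_leqP => e; rewrite /asbool.
case: excluded_middle_informative => // -[ps [ps_stress ps_indep]] _.
have [pp pp_stress pp_lift] := fin_all_exists2 (fun t => lift _ (ps_stress t)).
have lt_e : (e < 'C(n + i.+1, i.+1).+1)%N.
  by rewrite (leq_trans (ltn_ord e)) // ltnS addnS binS leq_addl.
apply: (@leq_bigmax_cond _ _ _ (Ordinal lt_e)); rewrite /asbool.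
case: excluded_middle_informative => // -[]; exists pp; split => // c.
move/(stress_mderivp hl); rewrite linear_sum /=.
under eq_bigr => t _ do rewrite linearZ /= pp_lift.
exact: ps_indep.
Qed.

End Stresses.

Theorem mainTheorem8 (R : realType) (n k : nat)
  (Sigma Delta : {set {set 'I_n}}) (v : 'I_n -> 'I_(k.*2.+1) -> R) :
  rational_sphere k Sigma ->
  is_lsop v Sigma ->
  hard_lefschetz v Sigma ->
  is_complex Delta -> Delta \subset Sigma ->
  (kappa v Sigma Delta k <= kappa v Sigma Delta k.+1)%N.
Proof.
(* Only the injectivity of l : A^k -> A^(k+1) is needed. *)
move=> _ _ [l [hl lefschetz]] _ _.
have [l_inj _] := lefschetz k (leqnSn _); rewrite subSnn expr1 in l_inj.
apply: (kappa_le_succ _ hl) => q; exact: stress_lift hl l_inj.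
Qed.
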